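(* Assume (A1). Let $g:\Gamma\to\mathbb R$ and let $u$ be the solution of problem (P) with boundary data $g$. Fix $x\in\mathcal X$ and define the stochastic process $X_0,X_1,X_2,\dots$ on $\mathcal X$ as follows: $X_0=x$; given $X_i$, if $X_i\in\Gamma$ set $X_{i+1}=X_i$; if $X_i\notin\Gamma$, choose $X_{i+1}$ (independently of everything else) by: with probability $\alpha$, $X_{i+1}=y$ with probability $w_{X_i y}/d_{X_i}$ (a random walk step); with probability $\frac12(1-\alpha)$, $X_{i+1}$ is a point of $\operatorname{argmax}_{y\in N_{X_i}}u(y)$; with probability $\frac12(1-\alpha)$, $X_{i+1}$ is a point of $\operatorname{argmin}_{y\in N_{X_i}\cap\Gamma}g(y)$ (ties broken by any fixed rule). Then $Z_i=u(X_i)$ is a sub-martingale with respect to $(X_i)$, i.e. $\mathbb E[Z_{i+1}\mid X_i]\ge Z_i$ for all $i\ge0$.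
   Context: $\mathcal X$ is a finite vertex set and $W=(w_{xy})$ a symmetric matrix of nonnegative weights defining a connected graph, with degrees $d_x=\sum_{y}w_{xy}$ and neighbor sets $N_x=\{y\in\mathcal X:w_{xy}>0\}$. For $p\ge2$, $\alpha=1/(p-1)$, and $$\mathcal L_p u(x)=\alpha\,\frac{1}{d_x}\sum_{y}w_{xy}\big(u(x)-u(y)\big)+(1-\alpha)\Big(u(x)-\tfrac12\big(\max_{N_x}u+\min_{N_x}u\big)\Big).$$ $\Gamma\subset\mathcal X$ is the set of labeled vertices. Problem (P): find $u:\mathcal X\to\mathbb R$ with $\mathcal L_pu(x)=0$ for $x\in\mathcal X\setminus\Gamma$ and $u=g$ on $\Gamma$; since the graph is connected it has a unique solution. Assumption (A1): $\Gamma\cap N_x\neq\varnothing$ for every $x\in\mathcal X$. *)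

From HB Require Import structures.
From mathcomp Require Import all_boot all_order all_algebra.
Set Implicit Arguments. Unset Strict Implicit. Unset Printing Implicit Defensive.
Import Order.TTheory GRing.Theory Num.Theory.
Local Open Scope ring_scope.

Section Graph.
Variables (R : realFieldType) (T : finType) (w : T -> T -> R).

Definition deg (x : T) : R := \sum_(y : T) w x y.

Definition nbhd (x : T) : {set T} := [set y | 0 < w x y].

(* max / min of u over N_x (seeded with an element of N_x; N_x nonempty under (A1)) *)
Definition maxN (u : T -> R) (x : T) : R :=
  match [pick y in nbhd x] with
  | Some y0 => \big[Num.max/u y0]_(y in nbhd x) u y
  | None => 0
  end.
Definition minN (u : T -> R) (x : T) : R :=
  match [pick y in nbhd x] with
  | Some y0 => \big[Num.min/u y0]_(y in nbhd x) u y
  | None => 0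
  end.

Definition alpha (p : R) : R := 1 / (p - 1).
Definition Lp (p : R) (u : T -> R) (x : T) : R :=
  alpha p * ((deg x)^-1 * \sum_(y : T) w x y * (u x - u y))
  + (1 - alpha p) * (u x - (maxN u x + minN u x) / 2).

Definition connected_graph : Prop :=
  forall x y : T, connect [rel a b | 0 < w a b] x y.

(* transition kernel of the process, given the tie-breaking rules
   smax y \in argmax_{N_y} u  and  smin y \in argmin_{N_y \cap Gamma} g *)
Definition kernel (p : R) (Gam : {set T}) (smax smin : T -> T) (y z : T) : R :=
  if y \in Gam then (z == y)%:R
  else alpha p * (w y z / deg y)
       + (1 - alpha p) / 2 * (z == smax y)%:R
       + (1 - alpha p) / 2 * (z == smin y)%:R.

(* probability of the path X_0 = s 0, ..., X_n = s n, started at x *)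
Definition pathP (p : R) (Gam : {set T}) (smax smin : T -> T) (x : T) (n : nat)
  (s : {ffun 'I_n.+1 -> T}) : R :=
  (s ord0 == x)%:R *
  \prod_(k < n) kernel p Gam smax smin (s (inord k)) (s (inord k.+1)).

(* P(X_i = y, X_{i+1} = z) *)
Definition jointP (p : R) (Gam : {set T}) (smax smin : T -> T) (x : T) (i : nat)
  (y z : T) : R :=
  \sum_(s : {ffun 'I_(i.+2) -> T})
     pathP p Gam smax smin x s * ((s (inord i) == y) && (s (inord i.+1) == z))%:R.

End Graph.

(* On an unlabeled vertex y the equation L_p u (y) = 0 says that
   alpha * (mean of u over the weights) + (1 - alpha)/2 * (max_{N_y} u + min_{N_y} u)
   equals u(y).  The process replaces min_{N_y} u by the value of u at the labeled
   neighbour minimizing g, which is at least min_{N_y} u, so the expected increment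
   of u in one step is (1 - alpha)/2 * (u (smin y) - min_{N_y} u) >= 0 (and 0 on
   labeled vertices, which are absorbing).  By the Markov property the law of
   (X_i, X_{i+1}) is P(X_i = y) times the kernel row at y, hence the claim. *)
From Pilot Require Import Defs.
From HB Require Import structures.
From mathcomp Require Import all_boot all_order all_algebra.
From mathcomp Require Import ring.
Import Order.TTheory GRing.Theory Num.Theory.
Local Open Scope ring_scope.
Set Implicit Arguments. Unset Strict Implicit.

Lemma sum_delta_mull (S : pzSemiRingType) (T : finType) (a : T) (f : T -> S) :
  \sum_z (z == a)%:R * f z = f a.
Proof.
rewrite (bigD1 a) //= eqxx mul1r big1 ?addr0 // => z /negbTE ->.
by rewrite mul0r.
Qed.

Definition fupd (I T : finType) (f : {ffun I -> T}) (a : I) (z : T) : {ffun I -> T} :=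
  [ffun k => if k == a then z else f k].

Lemma fupd_eq (I T : finType) (f : {ffun I -> T}) a z : fupd f a z a = z.
Proof. by rewrite ffunE eqxx. Qed.

Lemma fupd_neq (I T : finType) (f : {ffun I -> T}) a z k : k != a -> fupd f a z k = f k.
Proof. by rewrite ffunE => /negbTE ->. Qed.

(* Every [g] is [fupd f a z] for exactly one pair with [f a = t0], namely [z = g a]. *)
Lemma sum_ffun_fupd (R : nmodType) (I T : finType) (a : I) (t0 : T)
    (G : {ffun I -> T} -> R) :
  \sum_f G f = \sum_(f : {ffun I -> T} | f a == t0) \sum_z G (fupd f a z).
Proof.
rewrite (partition_big (fun f : {ffun I -> T} => f a) predT) //= [RHS]exchange_big /=.
apply: eq_bigr => z _.
have fupdK b c (f : {ffun I -> T}) : f a = c -> fupd (fupd f a b) a c = f.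
  by move=> fa; apply/ffunP => k; rewrite !ffunE; case: eqP => // ->.
rewrite (reindex_onto (fun f => fupd f a z) (fun f => fupd f a t0)) /=; last first.
  by move=> f /eqP; apply: fupdK.
apply: eq_bigl => f; rewrite fupd_eq eqxx /=.
apply/eqP/eqP => [<-|fa]; last exact: fupdK.
by rewrite fupd_eq.
Qed.

Lemma inord_last_eqF i k : (k <= i)%N -> (@inord i.+1 k == inord i.+1) = false.
Proof.
move=> ki; rewrite -(inj_eq val_inj) /= !inordK ?ltnS ?(leq_trans ki) //.
by rewrite ltn_eqF ?ltnS.
Qed.

Lemma alpha_ge0 (R : realFieldType) (p : R) : 2 <= p -> 0 <= alpha p.
Proof.
move=> hp; rewrite /alpha mul1r invr_ge0 subr_ge0.
by rewrite (le_trans _ hp) ?ler1n.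
Qed.

Lemma alpha_le1 (R : realFieldType) (p : R) : 2 <= p -> alpha p <= 1.
Proof.
move=> hp; rewrite /alpha mul1r invf_le1 // ?lerBrDr //.
by rewrite subr_gt0 (lt_le_trans _ hp) ?ltr1n.
Qed.

Lemma minN_le (R : realFieldType) (T : finType) (w : T -> T -> R) u y z :
  z \in nbhd w y -> minN w u y <= u z.
Proof.
move=> zN; rewrite /minN; case: pickP => [y0 _|none]; first exact: bigmin_le_cond.
by have := none z; rewrite zN.
Qed.

Section Process.
Variables (R : realFieldType) (T : finType) (w : T -> T -> R).
Variables (p : R) (Gam : {set T}) (smax smin : T -> T).
Hypothesis w_ge0 : forall a b, 0 <= w a b.
Hypothesis hp : 2 <= p.

Local Notation K := (kernel w p Gam smax smin).

Lemma kernel_ge0 y z : 0 <= K y z.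
Proof.
rewrite /kernel; case: ifP => _; first exact: ler0n.
have c_ge0 : 0 <= (1 - alpha p) / 2 by rewrite divr_ge0 ?subr_ge0 ?alpha_le1.
have deg_ge0 : 0 <= deg w y by apply: sumr_ge0.
by rewrite !addr_ge0 // mulr_ge0 ?ler0n // ?alpha_ge0 // divr_ge0.
Qed.

Lemma kernel_fixed y f : y \in Gam -> \sum_z K y z * f z = f y.
Proof. by move=> yG; under eq_bigr do rewrite /kernel yG; rewrite sum_delta_mull. Qed.

Section Drift.
Variable u : T -> R.
Hypothesis u_eq : forall y, y \notin Gam -> Lp w p u y = 0.
Hypothesis smax_max : forall y, u (smax y) = maxN w u y.
Hypothesis smin_in : forall y, smin y \in Gam :&: nbhd w y.

Lemma kernel_drift y : y \notin Gam ->
  \sum_z K y z * (u z - u y) = (1 - alpha p) / 2 * (u (smin y) - minN w u y).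
Proof.
move=> yG; have := u_eq yG; rewrite /Lp /kernel (negbTE yG).
move: (alpha p) (deg w y) => a d; set S := \sum_z _ => Lp0.
under eq_bigr do rewrite mulrDl mulrDl -!mulrA.
rewrite !big_split /= -!mulr_sumr !sum_delta_mull smax_max.
have -> : \sum_z w y z * (d^-1 * (u z - u y)) = - (d^-1 * S).
  by rewrite /S mulr_sumr -sumrN; apply: eq_bigr => z _; ring.
rewrite -[LHS]addr0 -Lp0.
by move: (d^-1 * S) => D; field.
Qed.

Lemma kernel_drift_ge0 y : 0 <= \sum_z K y z * (u z - u y).
Proof.
have [yG|yG] := boolP (y \in Gam); first by rewrite kernel_fixed // subrr.
rewrite kernel_drift // mulr_ge0 ?divr_ge0 ?subr_ge0 ?alpha_le1 //.
exact/minN_le/(setIP (smin_in y)).2.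
Qed.

End Drift.

Variable x : T.

Definition prefixP (i : nat) (s : {ffun 'I_i.+2 -> T}) : R :=
  (s ord0 == x)%:R * \prod_(k < i) K (s (inord k)) (s (inord k.+1)).

Lemma pathP_last i (s : {ffun 'I_i.+2 -> T}) :
  Defs.pathP w p Gam smax smin x s = prefixP s * K (s (inord i)) (s (inord i.+1)).
Proof. by rewrite /Defs.pathP big_ord_recr mulrA. Qed.

Lemma prefixP_fupd_last i (s : {ffun 'I_i.+2 -> T}) z :
  prefixP (fupd s (inord i.+1) z) = prefixP s.
Proof.
rewrite /prefixP fupd_neq; last by rewrite -(inj_eq val_inj) /= inordK.
congr (_ * _); apply: eq_bigr => k _.
by rewrite !fupd_neq ?inord_last_eqF // ltnW.
Qed.

Lemma prefixP_ge0 i (s : {ffun 'I_i.+2 -> T}) : 0 <= prefixP s.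
Proof. by rewrite mulr_ge0 ?ler0n ?prodr_ge0 // => k _; apply: kernel_ge0. Qed.

(* The witness [m] is P(X_i = y), computed on paths whose unused last entry is fixed to [y]. *)
Lemma jointP_markov i y : exists2 m : R, 0 <= m &
  forall f : T -> R,
    \sum_z jointP w p Gam smax smin x i y z * f z = m * \sum_z K y z * f z.
Proof.
exists (\sum_(s : {ffun 'I_i.+2 -> T} | s (inord i.+1) == y)
          prefixP s * (s (inord i) == y)%:R).
  by apply: sumr_ge0 => s _; rewrite mulr_ge0 ?prefixP_ge0 ?ler0n.
move=> f; rewrite mulr_suml.
transitivity (\sum_(s : {ffun 'I_i.+2 -> T})
    Defs.pathP w p Gam smax smin x s * (s (inord i) == y)%:R * f (s (inord i.+1))).
  rewrite /jointP; under eq_bigr do rewrite mulr_suml; rewrite exchange_big /=.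
  apply: eq_bigr => s _; rewrite (bigD1 (s (inord i.+1))) //= eqxx andbT big1 ?addr0 //.
  by move=> z /negbTE zs; rewrite [_ == z]eq_sym zs andbF mulr0 mul0r.
rewrite (sum_ffun_fupd (inord i.+1) y); apply: eq_bigr => s _.
rewrite mulr_sumr; apply: eq_bigr => z _.
rewrite pathP_last prefixP_fupd_last fupd_eq fupd_neq ?inord_last_eqF //.
by case: eqP => [->|_]; rewrite ?mulr0 ?mul0r // !mulr1 mulrA.
Qed.

End Process.

(* Of the choice of [smin y] only [smin y \in nbhd w y] matters; symmetry,
   connectivity, (A1) and the boundary values are not needed for this step. *)
Theorem mainTheorem2 (R : realFieldType) (T : finType) (w : T -> T -> R)
  (Gam : {set T}) (p : R) (g u : T -> R) (x : T) (smax smin : T -> T)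
  (w_ge0 : forall a b, 0 <= w a b)
  (w_sym : forall a b, w a b = w b a)
  (w_conn : connected_graph w)
  (hp : 2 <= p)
  (A1 : forall y : T, Gam :&: nbhd w y != set0)
  (u_eq : forall y, y \notin Gam -> Lp w p u y = 0)
  (u_bd : forall y, y \in Gam -> u y = g y)
  (smax_in : forall y, smax y \in nbhd w y)
  (smax_max : forall y, u (smax y) = maxN w u y)
  (smin_in : forall y, smin y \in Gam :&: nbhd w y)
  (smin_min : forall y z, z \in Gam :&: nbhd w y -> g (smin y) <= g z) :
  forall (i : nat) (y : T),
    \sum_(z : T) jointP w p Gam smax smin x i y z * u z
      >= u y * \sum_(z : T) jointP w p Gam smax smin x i y z.
Proof.
move=> i y; have [m m_ge0 markov] := jointP_markov Gam smax smin w_ge0 hp x i y.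
rewrite -subr_ge0 mulr_sumr -sumrB.
under eq_bigr do rewrite [u y * _]mulrC -mulrBr.
by rewrite markov mulr_ge0 // (kernel_drift_ge0 hp u_eq smax_max smin_in).
Qed.
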